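(* Let $X$ be a real Hilbert space, let $A\colon X\rightrightarrows X$ with $\operatorname{dom}A\ne\varnothing$, let $\rho\in\,]-1,+\infty[$, set $D=\operatorname{ran}(\mathrm{Id}+A)$, $T=J_A$ (i.e., $A=T^{-1}-\mathrm{Id}$), and $N=2(\rho+1)T-(2\rho+1)\mathrm{Id}$ (i.e., $T=\tfrac{2\rho+1}{2(\rho+1)}\mathrm{Id}+\tfrac{1}{2(\rho+1)}N$). Then: (i) $A$ is $\rho$-comonotone $\iff$ $N$ is nonexpansive. (ii) $A$ is maximally $\rho$-comonotone $\iff$ [$N$ is nonexpansive and $D=X$].
   Context: $J_A=(\mathrm{Id}+A)^{-1}$, defined on $D=\operatorname{ran}(\mathrm{Id}+A)$. An operator $N$ with domain $D$ is nonexpansive if it is single-valued and $\|Nx-Ny\|\le\|x-y\|$ for all $x,y\in D$. For $\rho\in\mathbb R$, $A$ is $\rho$-comonotone if $\langle x-y,u-v\rangle\ge\rho\|u-v\|^2$ for all $(x,u),(y,v)\in\operatorname{gra}A$; maximally $\rho$-comonotone if moreover no $\rho$-comonotone operator has a graph properly containing $\operatorname{gra}A$. *)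

From HB Require Import structures.
From mathcomp Require Import all_boot all_order all_algebra.
From mathcomp Require Import all_classical all_reals topology normedtype.
Set Implicit Arguments. Unset Strict Implicit. Unset Printing Implicit Defensive.
Import Order.TTheory GRing.Theory Num.Theory.
Import numFieldNormedType.Exports.
Local Open Scope classical_set_scope.
Local Open Scope ring_scope.

(* ip is an inner product on the normed space X inducing its norm.
   A complete normed space with such an ip is a real Hilbert space. *)
Definition is_inner_product (R : realType) (X : normedModType R)
  (ip : X -> X -> R) : Prop :=
  [/\ (forall x y, ip x y = ip y x),
      (forall a x y z, ip (a *: x + y) z = a * ip x z + ip y z)
    & (forall x, ip x x = `|x| ^+ 2)].

Definition dom_op (X : Type) (A : X -> set X) : set X :=
  [set x | exists u, A x u].

Definition resolvent (R : realType) (X : normedModType R) (A : X -> set X)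
  : X -> set X := fun y x => exists u, A x u /\ y = x + u.

(* ran (Id + A) = dom J_A *)
Definition ran_IdA (R : realType) (X : normedModType R) (A : X -> set X)
  : set X := dom_op (resolvent A).

Definition comonotone (R : realType) (X : normedModType R)
  (ip : X -> X -> R) (rho : R) (A : X -> set X) : Prop :=
  forall x u y v, A x u -> A y v -> rho * `|u - v| ^+ 2 <= ip (x - y) (u - v).

Definition max_comonotone (R : realType) (X : normedModType R)
  (ip : X -> X -> R) (rho : R) (A : X -> set X) : Prop :=
  comonotone ip rho A /\
  forall B : X -> set X, comonotone ip rho B ->
    (forall x u, A x u -> B x u) -> forall x u, B x u -> A x u.

Definition nonexpansive_on (R : realType) (X : normedModType R)
  (D : set X) (N : X -> set X) : Prop :=
  [/\ (forall y, D y <-> exists z, N y z),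
      (forall y z1 z2, N y z1 -> N y z2 -> z1 = z2)
    & (forall x y zx zy, N x zx -> N y zy -> `|zx - zy| <= `|x - y|)].

Definition reflected_op (R : realType) (X : normedModType R) (rho : R)
  (A : X -> set X) : X -> set X :=
  fun y z => exists x, resolvent A y x /\
    z = (2 * (rho + 1)) *: x - (2 * rho + 1) *: y.

From HB Require Import structures.
From mathcomp Require Import all_boot all_order all_algebra.
From mathcomp Require Import all_classical all_reals topology normedtype.
From mathcomp Require Import ring lra.
Import Order.TTheory GRing.Theory Num.Theory.
Import numFieldNormedType.Exports.
Local Open Scope classical_set_scope.
Local Open Scope ring_scope.
Set Implicit Arguments. Unset Strict Implicit. Unset Printing Implicit Defensive.

(* Write a point (x, u) of gra A as y = x + u, so that N y = x - (2 rho + 1) u.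
   Expanding the norms gives
     |y1 - y2|^2 - |N y1 - N y2|^2 = 4 (rho + 1) (<x1 - x2, u1 - u2> - rho |u1 - u2|^2),
   so rho-comonotonicity of A is nonexpansiveness of N, which is (i).  If moreover
   D = X, a pair of a comonotone extension of A has the same y as a pair of A, hence
   the same N y, hence is that pair: A is maximal.  Conversely, if A is maximal, the
   Kirszbraun-Valentine theorem provides for every p some q with |q - N y| <= |p - y|
   for all y in D; the pair with y = p and N y = q keeps A comonotone, so it is in A
   and p lies in D.
   The one-point extension holds for finitely many points up to any slack: the defect
   sum_i l_i (|sum_k l_k a_k - a_i|^2 - |p - y_i|^2) is nonpositive on the simplex,
   since the weighted pairwise distances of the a_i are dominated by those of the y_i,
   and the barycenter of a near-maximizing l is an approximate extension.  The sets of
   approximate extensions over finite subsets of D form a directed family of convex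
   sets; by the parallelogram law the near-minimizers of the norm over this family form
   a Cauchy filter, whose limit lies in the closure of every member. *)

Section InnerProduct.
Variables (R : realType) (X : normedModType R) (ip : X -> X -> R).
Hypothesis ipP : is_inner_product ip.

Lemma ipC x y : ip x y = ip y x. Proof. by case: ipP. Qed.

Lemma ipxx x : ip x x = `|x| ^+ 2. Proof. by case: ipP. Qed.

Lemma ip_linear a x y z : ip (a *: x + y) z = a * ip x z + ip y z.
Proof. by case: ipP. Qed.

Lemma ip0l z : ip 0 z = 0.
Proof. by have := ip_linear 1 0 0 z; rewrite scaler0 addr0 mul1r => h; lra. Qed.

Lemma ipZl a x z : ip (a *: x) z = a * ip x z.
Proof. by rewrite -[a *: x]addr0 ip_linear ip0l addr0. Qed.

Lemma ipDl x y z : ip (x + y) z = ip x z + ip y z.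
Proof. by rewrite -{1}[x]scale1r ip_linear mul1r. Qed.

Lemma ipZr a x z : ip z (a *: x) = a * ip z x.
Proof. by rewrite ipC ipZl ipC. Qed.

Lemma ipDr x y z : ip z (x + y) = ip z x + ip z y.
Proof. by rewrite ipC ipDl ipC [ip y z]ipC. Qed.

Lemma ip0r z : ip z 0 = 0.
Proof. by rewrite ipC ip0l. Qed.

Lemma ipNr x z : ip z (- x) = - ip z x.
Proof. by rewrite -scaleN1r ipZr mulN1r. Qed.

Lemma ip_sumr (I : Type) (r : seq I) (P : pred I) (F : I -> X) z :
  ip z (\sum_(i <- r | P i) F i) = \sum_(i <- r | P i) ip z (F i).
Proof. exact: (big_morph (ip z) (fun x y => ipDr x y z) (ip0r z)). Qed.

Lemma sqr_normD x y : `|x + y| ^+ 2 = `|x| ^+ 2 + 2 * ip x y + `|y| ^+ 2.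
Proof. by rewrite -!ipxx ipDl !ipDr [ip y x]ipC; ring. Qed.

Lemma sqr_normB x y : `|x - y| ^+ 2 = `|x| ^+ 2 - 2 * ip x y + `|y| ^+ 2.
Proof. by rewrite sqr_normD ipNr normrN mulrN. Qed.

Lemma parallelogram (x y : X) :
  `|x + y| ^+ 2 + `|x - y| ^+ 2 = 2 * `|x| ^+ 2 + 2 * `|y| ^+ 2.
Proof. by rewrite sqr_normD sqr_normB; ring. Qed.

End InnerProduct.

Definition barycenter (R : pzRingType) (V : lmodType R) (I : finType)
  (lam : I -> R) (w : I -> V) : V := \sum_i lam i *: w i.

Definition simplex (R : numDomainType) (I : finType) (lam : I -> R) : Prop :=
  (forall i, 0 <= lam i) /\ \sum_i lam i = 1.

Section Barycenter.
Variables (R : realType) (X : normedModType R) (ip : X -> X -> R).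
Hypothesis ipP : is_inner_product ip.
Variables (I : finType) (lam : I -> R).
Hypothesis lam_sum1 : \sum_i lam i = 1.

Lemma sum_scale_barycenter_dev (w : I -> X) :
  \sum_i lam i *: (barycenter lam w - w i) = 0.
Proof.
under eq_bigr do rewrite scalerBr.
by rewrite sumrB -scaler_suml lam_sum1 scale1r subrr.
Qed.

Lemma koenig_huygens (c : X) (w : I -> X) :
  \sum_i lam i * `|c - w i| ^+ 2 =
  `|c - barycenter lam w| ^+ 2 + \sum_i lam i * `|barycenter lam w - w i| ^+ 2.
Proof.
set b := barycenter lam w.
transitivity (\sum_i (lam i * `|c - b| ^+ 2
   + 2 * ip (c - b) (lam i *: (b - w i)) + lam i * `|b - w i| ^+ 2)).
  apply: eq_bigr => i _.
  by rewrite -[c - w i](subrKA b) (sqr_normD ipP) (ipZr ipP); ring.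
rewrite !big_split /= -big_distrl -big_distrr -(ip_sumr ipP) /= lam_sum1.
by rewrite sum_scale_barycenter_dev (ip0r ipP) mulr0 addr0 mul1r.
Qed.

Lemma wsum_sqr_dist_pairs (w : I -> X) :
  \sum_j lam j * \sum_i lam i * `|w j - w i| ^+ 2 =
  2 * \sum_i lam i * `|barycenter lam w - w i| ^+ 2.
Proof.
under eq_bigr => j _ do rewrite koenig_huygens mulrDr distrC.
by rewrite big_split /= -big_distrl /= lam_sum1 mul1r; ring.
Qed.

End Barycenter.

Section TowardVertex.
Variables (R : comPzRingType) (I : finType).

Definition toward_vertex (lam : I -> R) (t : R) (j : I) : I -> R :=
  fun i => (1 - t) * lam i + t * (i == j)%:R.

Lemma sum_indicatorZ (V : lmodType R) (j : I) (w : I -> V) :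
  \sum_i (i == j)%:R *: w i = w j.
Proof.
rewrite (bigD1 j) //= eqxx scale1r big1 ?addr0 // => i /negbTE ->.
by rewrite scale0r.
Qed.

Lemma barycenter_toward_vertex (V : lmodType R) lam t j (w : I -> V) :
  barycenter (toward_vertex lam t j) w = (1 - t) *: barycenter lam w + t *: w j.
Proof.
rewrite /barycenter /toward_vertex.
under eq_bigr do rewrite scalerDl -!scalerA.
by rewrite big_split /= -!scaler_sumr sum_indicatorZ.
Qed.

Lemma wsum_toward_vertex lam t j (G : I -> R) :
  \sum_i toward_vertex lam t j i * G i = (1 - t) * \sum_i lam i * G i + t * G j.
Proof. exact: (barycenter_toward_vertex (V := R^o)). Qed.

End TowardVertex.

Lemma simplex_toward_vertex (R : numDomainType) (I : finType) (lam : I -> R) t j :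
  simplex lam -> 0 <= t <= 1 -> simplex (toward_vertex lam t j).
Proof.
move=> [lam_ge0 lam_sum1] /andP[t_ge0 t_le1]; split.
  by move=> i; apply: addr_ge0; apply: mulr_ge0; rewrite ?subr_ge0.
rewrite /toward_vertex big_split /= -!big_distrr /= lam_sum1 mulr1.
by rewrite (bigD1 j) //= eqxx big1 ?addr0 ?mulr1 ?subrK // => i /negbTE ->.
Qed.

Section FiniteExtension.
Variables (R : realType) (X : normedModType R) (ip : X -> X -> R).
Hypothesis ipP : is_inner_product ip.
Variables (I : finType) (y a : I -> X) (p : X).
Hypothesis a_nonexpansive : forall i j, `|a i - a j| <= `|y i - y j|.

Definition defect (lam : I -> R) : R :=
  \sum_i lam i * (`|barycenter lam a - a i| ^+ 2 - `|p - y i| ^+ 2).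

Lemma defect_le0 lam : simplex lam -> defect lam <= 0.
Proof.
move=> [lam_ge0 lam_sum1].
have spread_a_le_y : \sum_i lam i * `|barycenter lam a - a i| ^+ 2 <=
                     \sum_i lam i * `|barycenter lam y - y i| ^+ 2.
  rewrite -(ler_pM2l (_ : 0 < 2)) // -!(wsum_sqr_dist_pairs ipP lam_sum1).
  apply: ler_sum => j _; apply: ler_wpM2l => //.
  apply: ler_sum => i _; apply: ler_wpM2l => //.
  by rewrite ler_sqr ?nnegrE.
rewrite /defect; under eq_bigr do rewrite mulrBr.
rewrite sumrB (koenig_huygens ipP lam_sum1 p y).
have := sqr_ge0 `|p - barycenter lam y|; lra.
Qed.

Lemma defect_toward_vertex lam t j : \sum_i lam i = 1 ->
  defect (toward_vertex lam t j) = (1 - t) * defect lam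
    + t * ((1 - t) * `|barycenter lam a - a j| ^+ 2 - `|p - y j| ^+ 2).
Proof.
move=> lam_sum1; rewrite /defect wsum_toward_vertex barycenter_toward_vertex.
set b := barycenter lam a; set bt := (1 - t) *: b + t *: a j.
have -> : \sum_i lam i * (`|bt - a i| ^+ 2 - `|p - y i| ^+ 2) =
          `|bt - b| ^+ 2 + defect lam.
  rewrite /defect; under eq_bigr do rewrite mulrBr.
  under [in RHS]eq_bigr do rewrite mulrBr.
  by rewrite !sumrB (koenig_huygens ipP lam_sum1) addrA.
have -> : bt - b = t *: (a j - b).
  by rewrite /bt scalerBl scale1r scalerBr addrC addrA addKr addrC.
have -> : bt - a j = (1 - t) *: (b - a j).
  by rewrite /bt scalerBr (scalerBl 1 t (a j)) scale1r opprB addrA.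
rewrite /defect !normrZ !exprMn !real_normK ?num_real // distrC; ring.
Qed.

Lemma finite_extension_approx eta : 0 < eta ->
  exists q, forall j, `|q - a j| ^+ 2 <= `|p - y j| ^+ 2 + eta.
Proof.
move=> eta_gt0.
have [i0 _ | I0] := pickP (fun _ : I => true); last first.
  by exists 0 => j; have := I0 j.
pose D := [set defect lam | lam in @simplex R I].
pose vertex i : R := (i == i0)%:R.
have vertex_simplex : simplex vertex.
  split=> [i | ]; first by rewrite /vertex; case: (i == i0).
  by rewrite (bigD1 i0) //= /vertex eqxx big1 ?addr0 // => i /negbTE ->.
have D_ub : ubound D 0 by move=> _ [lam lamS <-]; exact: defect_le0.
have D_sup : has_sup D by split; [exists (defect vertex), vertex | exists 0].
have supD_le0 : sup D <= 0 by apply: ge_sup; [exists (defect vertex), vertex|].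
pose M := \sum_i `|p - y i| ^+ 2.
have r_le_M j : `|p - y j| ^+ 2 <= M.
  by rewrite /M (bigD1 j) //= lerDl sumr_ge0 // => i _; exact: sqr_ge0.
have M_ge0 : 0 <= M by apply: sumr_ge0 => i _; exact: sqr_ge0.
pose t := Num.min 2^-1 (eta / (2 * M + 2)).
have t_gt0 : 0 < t by rewrite lt_min invr_gt0 ltr0n divr_gt0 //; lra.
have t_le_half : t <= 2^-1 by rewrite ge_min lexx.
have t_eta : t * (2 * M + 2) <= eta.
  by rewrite -ler_pdivlMr ?ge_min ?lexx ?orbT //; lra.
have [_ [lam lamS <-] lam_near] := sup_adherent (mulr_gt0 t_gt0 t_gt0) D_sup.
exists (barycenter lam a) => j.
have : defect (toward_vertex lam t j) <= sup D.
  apply: (sup_upper_bound D_sup); exists (toward_vertex lam t j) => //.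
  by apply: simplex_toward_vertex => //; apply/andP; split; lra.
rewrite defect_toward_vertex; last by case: lamS.
have := r_le_M j; have := sqr_ge0 `|p - y j|.
have := sqr_ge0 `|barycenter lam a - a j|.
move: (`|barycenter lam a - a j| ^+ 2) (`|p - y j| ^+ 2).
move=> Xj rj Xj_ge0 rj_ge0 rj_le_M step.
have : (1 - t) * Xj - rj <= t.
  have : t * ((1 - t) * Xj - rj) <= t * t by nra.
  by rewrite ler_pM2l.
nra.
Qed.

End FiniteExtension.

Section DirectedConvexFamily.
Variables (R : realType) (X : completeNormedModType R) (ip : X -> X -> R).
Hypothesis ipP : is_inner_product ip.
Variable K : set (set X).
Hypothesis K_neq0 : forall C, K C -> C !=set0.
Hypothesis K_midpoint :
  forall C, K C -> forall q1 q2, C q1 -> C q2 -> C (2^-1 *: (q1 + q2)).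
Hypothesis K_directed :
  forall C1 C2, K C1 -> K C2 -> exists2 C, K C & C `<=` C1 `&` C2.
Hypothesis K_bounded : exists2 C0, K C0 & exists B, forall q, C0 q -> `|q| <= B.

Let dist2 (C : set X) : R := inf [set `|q| ^+ 2 | q in C].

Lemma has_inf_sqr_norm C : K C -> has_inf [set `|q| ^+ 2 | q in C].
Proof.
move=> KC; have [q Cq] := K_neq0 KC.
by split; [exists (`|q| ^+ 2), q | exists 0 => _ [x _ <-]; exact: sqr_ge0].
Qed.

Lemma dist2_le C q : K C -> C q -> dist2 C <= `|q| ^+ 2.
Proof.
by move=> KC Cq; apply: ge_inf; [case: (has_inf_sqr_norm KC) | exists q].
Qed.

Lemma has_sup_dist2 : has_sup (dist2 @` K).
Proof.
have [C0 KC0 [B C0_B]] := K_bounded.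
split; first by exists (dist2 C0), C0.
exists (B ^+ 2) => _ [C KC <-].
have [C' KC' C'_sub] := K_directed KC KC0.
have [q C'q] := K_neq0 KC'; have [Cq C0q] := C'_sub q C'q.
apply: (le_trans (dist2_le KC Cq)); have := C0_B q C0q; have := normr_ge0 q; nra.
Qed.

Let dist2_sup : R := sup (dist2 @` K).

Lemma dist2_le_sup C : K C -> dist2 C <= dist2_sup.
Proof. by move=> KC; apply: (sup_upper_bound has_sup_dist2); exists C. Qed.

Lemma near_minimizers_close C q1 q2 eps :
  K C -> dist2_sup - eps < dist2 C -> C q1 -> C q2 ->
  `|q1| ^+ 2 < dist2_sup + eps -> `|q2| ^+ 2 < dist2_sup + eps ->
  `|q1 - q2| ^+ 2 < 8 * eps.
Proof.
move=> KC C_near Cq1 Cq2 q1_near q2_near.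
have := dist2_le KC (K_midpoint KC Cq1 Cq2).
rewrite normrZ exprMn ger0_norm ?invr_ge0 //.
have := parallelogram ipP q1 q2; lra.
Qed.

Let near_min (Ce : set X * R) : set X :=
  Ce.1 `&` [set q | `|q| ^+ 2 < dist2_sup + Ce.2].

Let admissible : set (set X * R) := [set Ce | K Ce.1 /\ 0 < Ce.2].

Lemma near_min_neq0 Ce : admissible Ce -> near_min Ce !=set0.
Proof.
case: Ce => C e [/= KC e_gt0].
have [_ [q Cq <-] q_near] := inf_adherent e_gt0 (has_inf_sqr_norm KC).
exists q; split => //=.
by apply: (lt_le_trans q_near); rewrite lerD2r dist2_le_sup.
Qed.

Lemma near_min_filter : ProperFilter (filter_from admissible near_min).
Proof.
apply: filter_from_proper; last exact: near_min_neq0.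
apply: filter_from_filter.
  by have [C0 KC0 _] := K_bounded; exists (C0, 1).
move=> [C1 e1] [C2 e2] [/= KC1 e1_gt0] [/= KC2 e2_gt0].
have [C KC C_sub] := K_directed KC1 KC2.
exists (C, Num.min e1 e2) => [|q [/C_sub [C1q C2q] /= q_near]].
  by split => //=; rewrite lt_min e1_gt0.
split; split => //=; apply: (lt_le_trans q_near).
  by rewrite lerD2l ge_min lexx.
by rewrite lerD2l ge_min lexx orbT.
Qed.

Lemma near_min_cauchy : cauchy (filter_from admissible near_min).
Proof.
have FF := near_min_filter.
apply: cauchy_exP => e e_gt0.
have eps_gt0 : 0 < e ^+ 2 / 8 by rewrite divr_gt0 ?exprn_gt0.
have [_ [C KC <-] C_near] := sup_adherent eps_gt0 has_sup_dist2.
have [x [Cx x_near]] := @near_min_neq0 (C, e ^+ 2 / 8) (conj KC eps_gt0).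
exists x, (C, e ^+ 2 / 8) => // q [Cq q_near]; rewrite -ball_normE /=.
have := near_minimizers_close KC C_near Cx Cq x_near q_near.
have := normr_ge0 (x - q); nra.
Qed.

Lemma directed_midpoint_convex_meet_closure :
  exists l, forall C, K C -> closure C l.
Proof.
have FF := near_min_filter.
have F_cvg := cauchy_cvg _ near_min_cauchy.
exists (lim (filter_from admissible near_min)) => C KC U /F_cvg FU.
have FC : filter_from admissible near_min C by exists (C, 1) => // q [].
exact: filter_ex (filterI FC FU).
Qed.

End DirectedConvexFamily.

Lemma sub_midpoint (R : numFieldType) (V : lmodType R) (z q1 q2 : V) :
  z - 2^-1 *: (q1 + q2) = 2^-1 *: ((z - q1) + (z - q2)).
Proof.
have halves : 2^-1 + 2^-1 = 1 :> R by rewrite [RHS](splitr 1) div1r.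
rewrite addrACA -opprD scalerBr [2^-1 *: (z + z)]scalerDr -scalerDl.
by rewrite halves scale1r.
Qed.

Section Kirszbraun.
Variables (R : realType) (X : completeNormedModType R) (ip : X -> X -> R).
Hypothesis ipP : is_inner_product ip.
Variables (S : set (X * X)) (p : X).
Hypothesis S_nonexpansive :
  forall e e', S e -> S e' -> `|e.2 - e'.2| <= `|e.1 - e'.1|.

Definition ball_cap (F : seq (X * X)) (eta : R) : set X :=
  [set q | forall e, e \in F -> `|e.2 - q| <= `|p - e.1| + eta].

Lemma ball_cap_neq0 F eta : (forall e, e \in F -> S e) -> 0 < eta ->
  ball_cap F eta !=set0.
Proof.
move=> FS eta_gt0.
have a_nonexpansive (i j : seq_sub F) :
    `|(ssval i).2 - (ssval j).2| <= `|(ssval i).1 - (ssval j).1|.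
  by apply: S_nonexpansive; apply: FS; exact: ssvalP.
have [q q_near] := finite_extension_approx ipP p a_nonexpansive
  (exprn_gt0 2 eta_gt0).
exists q => e eF; have /= := q_near (SeqSub eF); rewrite distrC.
by have := normr_ge0 (q - e.2); have := normr_ge0 (p - e.1); nra.
Qed.

Lemma ball_cap_sub F1 F2 eta1 eta2 : {subset F1 <= F2} -> eta2 <= eta1 ->
  ball_cap F2 eta2 `<=` ball_cap F1 eta1.
Proof.
move=> F12 eta21 q q_near e eF.
by apply: le_trans (q_near e (F12 e eF)) _; rewrite lerD2l.
Qed.

Lemma ball_cap_midpoint F eta q1 q2 : ball_cap F eta q1 -> ball_cap F eta q2 ->
  ball_cap F eta (2^-1 *: (q1 + q2)).
Proof.
move=> q1F q2F e eF; rewrite sub_midpoint normrZ ger0_norm ?invr_ge0 //.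
have := ler_normD (e.2 - q1) (e.2 - q2); have := q1F e eF; have := q2F e eF.
lra.
Qed.

Lemma nonexpansive_extension_point :
  exists q, forall e, S e -> `|q - e.2| <= `|p - e.1|.
Proof.
have [[e0 Se0] | S0] := pselect (S !=set0); last first.
  by exists 0 => e Se; exfalso; apply: S0; exists e.
pose K := [set C | exists F eta,
  [/\ forall e, e \in F -> S e, 0 < eta & C = ball_cap F eta]].
have [l l_closure] : exists l, forall C, K C -> closure C l.
  apply: (directed_midpoint_convex_meet_closure ipP).
  - by move=> _ [F [eta [FS eta_gt0 ->]]]; exact: ball_cap_neq0.
  - by move=> _ [F [eta [_ _ ->]]]; exact: ball_cap_midpoint.
  - move=> _ _ [F1 [e1 [F1S e1_gt0 ->]]] [F2 [e2 [F2S e2_gt0 ->]]].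
    exists (ball_cap (F1 ++ F2) (Num.min e1 e2)).
      exists (F1 ++ F2), (Num.min e1 e2); split => //.
        by move=> e; rewrite mem_cat => /orP[/F1S | /F2S].
      by rewrite lt_min e1_gt0.
    by move=> q q_near; split; apply: ball_cap_sub q_near;
      rewrite ?ge_min ?lexx ?orbT // => e eF; rewrite mem_cat eF ?orbT.
  - exists (ball_cap [:: e0] 1).
      by exists [:: e0], 1; split => // e; rewrite inE => /eqP ->.
    exists (`|e0.2| + (`|p - e0.1| + 1)) => q /(_ e0 (mem_head _ _)) q_near.
    have := ler_normB e0.2 (e0.2 - q); rewrite opprB subrKC => q_le.
    by apply: (le_trans q_le); rewrite lerD2l.
exists l => e Se; rewrite distrC; apply/ler_addgt0Pr => eta eta_gt0.
have : closure (ball_cap [:: e] eta) `<=`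
       closed_ball_ Num.norm e.2 (`|p - e.1| + eta).
  rewrite [X in _ `<=` X](closure_id _).1; last exact: closed_closed_ball_.
  by apply: closureS => q /(_ e (mem_head _ _)).
apply; apply: l_closure; exists [:: e], eta; split => // e'.
by rewrite inE => /eqP ->.
Qed.

End Kirszbraun.

Section ReflectedResolvent.
Variables (R : realType) (X : normedModType R) (ip : X -> X -> R).
Hypothesis ipP : is_inner_product ip.
Variables (rho : R) (A : X -> set X).
Hypothesis rho_gtN1 : -1 < rho.

Lemma reflected_scale_gt0 : 0 < 2 * (rho + 1).
Proof. by rewrite mulr_gt0 // -ltrBlDr sub0r. Qed.

Lemma reflected_opP y z : reflected_op rho A y z <->
  exists x u, [/\ A x u, y = x + u & z = x - (2 * rho + 1) *: u].
Proof.
have reflect_sum x u :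
    (2 * (rho + 1)) *: x - (2 * rho + 1) *: (x + u) = x - (2 * rho + 1) *: u.
  rewrite scalerDr opprD addrA -scalerBl.
  by rewrite (_ : 2 * (rho + 1) - (2 * rho + 1) = 1) ?scale1r //; ring.
split=> [[x [[u [Axu ->]] ->]] | [x [u [Axu -> ->]]]]; exists x.
  by exists u; rewrite reflect_sum.
by split; [exists u | rewrite reflect_sum].
Qed.

Lemma resolvent_reflected_gap (x u : X) :
  (x + u) - (x - (2 * rho + 1) *: u) = (2 * (rho + 1)) *: u.
Proof.
rewrite opprB addrCA [x + u]addrC addrK -{2}[u]scale1r -scalerDl.
by congr (_ *: _); ring.
Qed.

Lemma sqr_norm_reflected_gap (x1 u1 x2 u2 : X) :
  `|(x1 + u1) - (x2 + u2)| ^+ 2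
  - `|(x1 - (2 * rho + 1) *: u1) - (x2 - (2 * rho + 1) *: u2)| ^+ 2 =
  4 * (rho + 1) * (ip (x1 - x2) (u1 - u2) - rho * `|u1 - u2| ^+ 2).
Proof.
have -> : (x1 + u1) - (x2 + u2) = (x1 - x2) + (u1 - u2) by rewrite opprD addrACA.
have -> : (x1 - (2 * rho + 1) *: u1) - (x2 - (2 * rho + 1) *: u2) =
          (x1 - x2) - (2 * rho + 1) *: (u1 - u2).
  by rewrite scalerBr opprB opprD opprK [RHS]addrACA [- x2 + _]addrC.
move: (x1 - x2) (u1 - u2) => dx du.
rewrite (sqr_normD ipP) (sqr_normB ipP) (ipZr ipP) normrZ exprMn.
by rewrite real_normK ?num_real //; ring.
Qed.

Lemma comonotone_pairP (x1 u1 x2 u2 : X) :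
  rho * `|u1 - u2| ^+ 2 <= ip (x1 - x2) (u1 - u2) <->
  `|(x1 - (2 * rho + 1) *: u1) - (x2 - (2 * rho + 1) *: u2)|
     <= `|(x1 + u1) - (x2 + u2)|.
Proof.
have gap_gt0 : 0 < 4 * (rho + 1) by have := reflected_scale_gt0 => ?; lra.
rewrite -subr_ge0 -(pmulr_rge0 _ gap_gt0) -sqr_norm_reflected_gap subr_ge0.
by rewrite ler_sqr ?nnegrE.
Qed.

Lemma comonotone_pair_sym (x1 u1 x2 u2 : X) :
  rho * `|u1 - u2| ^+ 2 <= ip (x1 - x2) (u1 - u2) ->
  rho * `|u2 - u1| ^+ 2 <= ip (x2 - x1) (u2 - u1).
Proof.
rewrite -[x2 - x1]opprB -[u2 - u1]opprB normrN (ipNr ipP (u1 - u2)).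
by rewrite (ipC ipP (- _)) (ipNr ipP (x1 - x2)) opprK (ipC ipP (u1 - u2)).
Qed.

Lemma comonotone_nonexpansiveP :
  comonotone ip rho A <-> nonexpansive_on (ran_IdA A) (reflected_op rho A).
Proof.
split=> [coA | [_ _ N_lip] x1 u1 x2 u2 A1 A2]; last first.
  by apply/comonotone_pairP; apply: N_lip; apply/reflected_opP;
    [exists x1, u1 | exists x2, u2].
have N_lip y1 y2 z1 z2 : reflected_op rho A y1 z1 -> reflected_op rho A y2 z2 ->
    `|z1 - z2| <= `|y1 - y2|.
  move=> /reflected_opP[x1 [u1 [A1 -> ->]]] /reflected_opP[x2 [u2 [A2 -> ->]]].
  by apply/comonotone_pairP; exact: coA.
split=> // [y | y z1 z2 N1 N2].
  split=> [[x Ryx] | [z [x [Ryx _]]]]; last by exists x.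
  by exists ((2 * (rho + 1)) *: x - (2 * rho + 1) *: y), x.
have := N_lip _ _ _ _ N1 N2.
by rewrite subrr normr0 normr_le0 subr_eq0 => /eqP.
Qed.

Lemma comonotone_add_point (x u : X) : comonotone ip rho A ->
  (forall x' u', A x' u' -> rho * `|u - u'| ^+ 2 <= ip (x - x') (u - u')) ->
  comonotone ip rho (fun x' u' => A x' u' \/ x' = x /\ u' = u).
Proof.
move=> coA xu_co x1 u1 x2 u2 [A1 | [-> ->]] [A2 | [-> ->]].
- exact: coA.
- exact/comonotone_pair_sym/xu_co.
- exact: xu_co.
- by rewrite !subrr normr0 expr0n mulr0 (ip0l ipP).
Qed.

Lemma full_range_max_comonotone :
  nonexpansive_on (ran_IdA A) (reflected_op rho A) -> ran_IdA A = setT ->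
  max_comonotone ip rho A.
Proof.
move=> NA ranA; split; first exact/comonotone_nonexpansiveP.
move=> B coB AB x u Bxu.
have [x' [u' [Ax'u' xuE]]] : ran_IdA A (x + u) by rewrite ranA.
have /comonotone_pairP := coB _ _ _ _ Bxu (AB _ _ Ax'u').
rewrite xuE subrr normr0 normr_le0 subr_eq0 => /eqP NE.
have uE : u = u'.
  apply: (scalerI (lt0r_neq0 reflected_scale_gt0)).
  rewrite /= -(resolvent_reflected_gap x u) -(resolvent_reflected_gap x' u').
  by rewrite xuE NE.
by move: xuE; rewrite uE => /addIr ->.
Qed.

End ReflectedResolvent.

Lemma max_comonotone_ran_IdA (R : realType) (X : completeNormedModType R)
  (ip : X -> X -> R) (rho : R) (A : X -> set X) :
  is_inner_product ip -> -1 < rho -> max_comonotone ip rho A -> ran_IdA A = setT.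
Proof.
move=> ipP rho_gtN1 [coA maxA]; apply/seteqP; split=> // y _.
have [_ _ N_lip] := (comonotone_nonexpansiveP ipP A rho_gtN1).1 coA.
have [q q_ext] := nonexpansive_extension_point ipP
  (S := [set e | reflected_op rho A e.1 e.2]) y (fun e e' => N_lip _ _ _ _).
pose u := (2 * (rho + 1))^-1 *: (y - q).
have yE : y = (y - u) + u by rewrite subrK.
have scale_u : (2 * (rho + 1)) *: u = y - q.
  by rewrite /u scalerA mulfV ?scale1r ?lt0r_neq0 ?reflected_scale_gt0.
have qE : q = (y - u) - (2 * rho + 1) *: u.
  have := resolvent_reflected_gap rho (y - u) u.
  by rewrite -yE scale_u => /addrI/oppr_inj.
have xu_co x' u' : A x' u' ->
    rho * `|u - u'| ^+ 2 <= ip ((y - u) - x') (u - u').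
  move=> Ax'u'; apply/(comonotone_pairP ipP rho_gtN1); rewrite -yE -qE.
  by apply: (q_ext (_, _)); apply/reflected_opP; exists x', u'.
have Axu : A (y - u) u.
  by apply: (maxA _ (comonotone_add_point ipP coA xu_co)); [left | right].
by exists (y - u), u.
Qed.

Theorem proposition3p12 (R : realType) (X : completeNormedModType R)
  (ip : X -> X -> R) (A : X -> set X) (rho : R) :
  is_inner_product ip ->
  dom_op A !=set0 ->
  -1 < rho ->
  (comonotone ip rho A <->
     nonexpansive_on (ran_IdA A) (reflected_op rho A)) /\
  (max_comonotone ip rho A <->
     (nonexpansive_on (ran_IdA A) (reflected_op rho A) /\
      ran_IdA A = setT)).
Proof.
move=> ipP _ rho_gtN1.
split; first exact: comonotone_nonexpansiveP.
split=> [maxA | [NA ranA]]; last exact: full_range_max_comonotone.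
split; last exact: max_comonotone_ran_IdA maxA.
by apply/(comonotone_nonexpansiveP ipP A rho_gtN1); case: maxA.
Qed.
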